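(* Let $k$ be a positive integer and suppose that $a/b$ and $x/y$ are adjacent vertices of $\mathcal F_k$. Then every neighbor of $a/b$ in $\mathcal F_k$ has the form $\frac{x+am}{y+bm}$ for some $m\in\mathbb Z$.
   Context: The vertex set $V$ consists of all reduced fractions $p/q$ with $p,q\in\mathbb Z$, $\gcd(p,q)=1$, together with $1/0$; here $p/q$ and $(-p)/(-q)$ denote the same vertex. For vertices define $d(p/q,a/b)=|pb-qa|$. The graph $\mathcal F_k$ has vertex set $V$, with an edge between $p/q$ and $a/b$ exactly when $d(p/q,a/b)=k$. *)

From Stdlib Require Export ZArith.
Open Scope Z_scope.

(* A vertex of F_k is represented by an integer pair (p, q) with gcd p q = 1,
   standing for the reduced fraction p/q (1/0 is the pair (1,0)).
   The pairs (p,q) and (-p,-q) denote the same vertex. *)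
Definition is_vertex (p q : Z) : Prop := Z.gcd p q = 1.

Definition same_vertex (p q a b : Z) : Prop :=
  (p = a /\ q = b) \/ (p = - a /\ q = - b).

Definition dF (p q a b : Z) : Z := Z.abs (p * b - q * a).

Definition adjF (k p q a b : Z) : Prop :=
  is_vertex p q /\ is_vertex a b /\ dF p q a b = k.

(* Two neighbours (x, y) and (c, d) of a/b in F_k satisfy
   a d - b c = +-(a y - b x), so after possibly replacing (c, d) by (-c, -d)
   the difference (c - x, d - y) solves a v = b u.  As gcd(a, b) = 1, a Bezout
   relation s a + t b = 1 shows that every solution of that equation is an
   integer multiple of (a, b). *)

From Stdlib Require Import ZArith Lia.

Lemma coprime_mul_eq_multiple (a b u v : Z) :
  Z.gcd a b = 1 -> a * v = b * u -> exists m, u = a * m /\ v = b * m.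
Proof.
  intros Hab Huv.
  destruct (Z.gcd_bezout _ _ _ Hab) as [s [t Hst]].
  exists (s * u + t * v); split.
  - transitivity ((s * a + t * b) * u); [rewrite Hst; ring |].
    transitivity (s * a * u + t * (b * u)); [ring |].
    rewrite <- Huv; ring.
  - transitivity ((s * a + t * b) * v); [rewrite Hst; ring |].
    transitivity (s * (a * v) + t * b * v); [ring |].
    rewrite Huv; ring.
Qed.

Lemma same_det_translate (a b x y c d : Z) :
  Z.gcd a b = 1 -> a * d - b * c = a * y - b * x ->
  exists m, c = x + a * m /\ d = y + b * m.
Proof.
  intros Hab Hdet.
  destruct (coprime_mul_eq_multiple a b (c - x) (d - y) Hab) as [m [Hc Hd]].
  - lia.
  - exists m; lia.
Qed.

Theorem lemma2p2 (k a b x y : Z) :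
  0 < k ->
  adjF k a b x y ->
  forall c d : Z, adjF k a b c d ->
  exists m : Z, same_vertex c d (x + a * m) (y + b * m).
Proof.
  intros _ [Hab [_ Hxy]] c d [_ [_ Hcd]].
  unfold dF in Hxy, Hcd.
  rewrite <- Hcd in Hxy.
  destruct (Z.abs_eq_cases _ _ Hxy) as [Hdet | Hdet].
  - destruct (same_det_translate a b x y c d Hab) as [m [Hc Hd]]; [lia |].
    exists m; left; split; assumption.
  - destruct (same_det_translate a b x y (- c) (- d) Hab) as [m [Hc Hd]];
      [lia |].
    exists m; right; split; lia.
Qed.
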